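(* Let $G$ be a finite group and $p$ a prime; let $\mathcal X$ be the set of $G$-conjugacy classes of nonidentity $p$-subgroups of $G$ and sums $\sum_{[K]}$ run over $\mathcal X$. Then the following functions $[H]\mapsto k^{[H]}$ on $\mathcal X$ are weightings, and the Euler characteristics are as stated: (i) $\mathcal T^*_G$: $k^{[H]}=\sum_{[K]}[\mu]([H],[K])$, and $\chi(\mathcal T^*_G)=\sum_{[K]}-[\mu]([K])$; (ii) $\mathcal L^*_G$: $k^{[H]}=\sum_{[K]}[\mu]([H],[K])\,|O^pC_G(K)|$, and $\chi(\mathcal L^*_G)=\sum_{[K]}-[\mu]([K])\,|O^pC_G(K)|$; (iii) $\mathcal F^*_G$: $k^{[H]}=\sum_{[K]}[\mu]([H],[K])\,|C_G(K)|$, and $\chi(\mathcal F^*_G)=\sum_{[K]}-[\mu]([K])\,|C_G(K)|$; (iv) $\mathcal O^*_G$: $k^{[H]}=|H|\sum_{[K]}[\mu]([H],[K])$, and $\chi(\mathcal O^*_G)=\sum_{[H],[K]}|H|\,[\mu]([H],[K])$.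
   Context: $N_G(H,K)=\{g\in G: g^{-1}Hg\le K\}$; $O^p(X)$ is the smallest normal subgroup of $X$ with $p$-group quotient. Categories with objects the nonidentity $p$-subgroups of $G$, composition induced by multiplication: $\mathcal T^*_G(H,K)=N_G(H,K)$, $\mathcal L^*_G(H,K)=O^p(C_G(H))\backslash N_G(H,K)$, $\mathcal F^*_G(H,K)=C_G(H)\backslash N_G(H,K)$, $\mathcal O^*_G(H,K)=N_G(H,K)/K$. For such a category $\mathcal C$, $|\mathcal C(H,K)|$ depends only on the conjugacy classes of $H,K$; a weighting on $\mathcal X$ for $\mathcal C$ means a function $k^{[\bullet]}$ on $\mathcal X$ with $\sum_{[K]\in\mathcal X}|\mathcal C(H,K)|\,k^{[K]}=1$ for every nonidentity $p$-subgroup $H$. $\chi$ is Leinster's Euler characteristic of the category (weighting $k^\bullet$: $\sum_b|\mathcal C(a,b)|k^b=1$ for all $a$; coweighting $k_\bullet$: $\sum_ak_a|\mathcal C(a,b)|=1$ for all $b$; $\chi=\sum k^b=\sum k_a$). $\mu(H,K)$ is the Möbius function of the poset of all subgroups of $G$, $\mu(K)=\mu(1,K)$; $[\mu]([H],[K])=|N_G(H)|^{-1}\sum_{L\in[K]}\mu(H,L)$, where $[K]$ is the set of $G$-conjugates of $K$, and $[\mu]([K])=|N_G(K)|^{-1}\mu(K)$. *)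

From mathcomp Require Import all_boot all_order all_algebra all_fingroup all_solvable.
Set Implicit Arguments. Unset Strict Implicit. Unset Printing Implicit Defensive.
Import GRing.Theory Num.Theory.
Local Open Scope group_scope.

Section Defs.
Variable gT : finGroupType.
Implicit Types (G H K L X : {group gT}).

Definition nonid_psub G (p : nat) K : bool :=
  [&& K \subset G, p.-group K & K :!=: 1].

(* N_G(H,K) = { g in G : g^-1 H g <= K }  (in mathcomp H :^ g = g^-1 H g) *)
Definition transp G H K : {set gT} := [set g in G | H :^ g \subset K].

Definition Oup (p : nat) X : {set gT} :=
  \bigcap_(N : {group gT} | (N <| X) && p.-group (X / N)) N.

Definition homT G H K : nat := #|transp G H K|.
(* O^p(C_G(H)) \ N_G(H,K): orbits of left multiplication = right cosets Xg *)
Definition homL G p H K : nat :=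
  #|rcosets (Oup p 'C_G(H)%G) (transp G H K)|.
Definition homF G H K : nat := #|rcosets 'C_G(H) (transp G H K)|.
(* N_G(H,K)/K : orbits of right multiplication by K = left cosets gK *)
Definition homO G H K : nat := #|lcosets K (transp G H K)|.

Fixpoint mobius_rec (n : nat) H K : rat :=
  if H \subset K then
    if H == K then 1%R else
    match n with
    | 0 => 0%R
    | n'.+1 => (- \sum_(L : {group gT} | (H \subset L) && (L \proper K))
                    mobius_rec n' H L)%R
    end
  else 0%R.
Definition mobius H K : rat := mobius_rec #|K| H K.
Definition mobius1 K : rat := mobius 1%G K.

Definition cmu G H K : rat :=
  ((#|'N_G(H)|%:R)^-1 * \sum_(L : {group gT} | gval L \in K :^: G) mobius H L)%R.
Definition cmu1 G K : rat := ((#|'N_G(K)|%:R)^-1 * mobius1 K)%R.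

Definition pclasses G p : {set {set {set gT}}} :=
  [set gval K :^: G | K : {group gT} in [pred K | nonid_psub G p K]].
Definition cls_rep (C : {set {set gT}}) : {group gT} :=
  odflt 1%G [pick K : {group gT} | gval K \in C].

Definition is_class_weighting G p (hom : {group gT} -> {group gT} -> nat)
    (k : {set {set gT}} -> rat) : Prop :=
  forall H, nonid_psub G p H ->
    (\sum_(C in pclasses G p) (hom H (cls_rep C))%:R * k C)%R = 1%R.

Definition is_weighting G p (hom : {group gT} -> {group gT} -> nat)
    (w : {group gT} -> rat) : Prop :=
  forall a, nonid_psub G p a ->
    (\sum_(b : {group gT} | nonid_psub G p b) (hom a b)%:R * w b)%R = 1%R.
Definition is_coweighting G p (hom : {group gT} -> {group gT} -> nat)
    (w : {group gT} -> rat) : Prop :=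
  forall b, nonid_psub G p b ->
    (\sum_(a : {group gT} | nonid_psub G p a) w a * (hom a b)%:R)%R = 1%R.

Definition euler_char_is G p (hom : {group gT} -> {group gT} -> nat)
    (x : rat) : Prop :=
  [/\ exists w, is_weighting G p hom w,
      exists v, is_coweighting G p hom v,
      forall w, is_weighting G p hom w ->
        (\sum_(b : {group gT} | nonid_psub G p b) w b)%R = x
    & forall v, is_coweighting G p hom v ->
        (\sum_(a : {group gT} | nonid_psub G p a) v a)%R = x].

End Defs.

(* Each of the four categories has hom-sets of size |N_G(H,K)| / (s(H) t(K)) for
   conjugation-invariant positive s, t: s = t = 1 for T; s(H) = |O^p C_G(H)| resp.
   |C_G(H)| for L and F, these groups acting freely on N_G(H,K) by left multiplication;
   t(K) = |K| for O, where K acts freely by right multiplication. Counting the g in G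
   with H^g <= K turns sum_K |N_G(H,K)| f(K) into sum_g sum_(K >= H^g) f(K). The
   nonidentity p-subgroups form a convex family of subgroups, so Moebius inversion holds
   on it, and shows that K |-> t(K)/|N_G(K)| sum_L mu(K,L) s(L) is a weighting and
   a |-> s(a)/|G| sum_c t(c) mu(c,a) a coweighting. Grouping the weighting by
   conjugacy classes gives the [mu] formulas, and the Euler characteristic is the sum
   of the coweighting, evaluated with sum_(c <> 1) mu(c,a) = - mu(1,a). *)

From mathcomp Require Import all_boot all_order all_algebra all_fingroup all_solvable.
From mathcomp Require Import ring.
Import GRing.Theory Num.Theory.
Set Implicit Arguments. Unset Strict Implicit. Unset Printing Implicit Defensive.
Local Open Scope group_scope.

Section Mobius.
Variable gT : finGroupType.
Implicit Types H K L : {group gT}.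

Lemma mobius_rec_stable n m H K : #|K| <= n -> #|K| <= m ->
  mobius_rec n H K = mobius_rec m H K.
Proof.
elim: n m K => [|n IHn] [|m] K leKn leKm /=;
  try by [have := leq_trans (cardG_gt0 K) leKn | have := leq_trans (cardG_gt0 K) leKm].
case: ifP => // _; case: ifP => // _; congr (- _)%R.
apply: eq_bigr => L /andP[_ /proper_card ltLK].
by apply: IHn; rewrite -ltnS (leq_trans ltLK).
Qed.

Lemma mobiusE H K : mobius H K =
  if H \subset K then
    if H == K then 1%R
    else (- \sum_(L : {group gT} | (H \subset L) && (L \proper K)) mobius H L)%R
  else 0%R.
Proof.
rewrite /mobius; case cardK: #|K| => [|n]; first by move: (cardG_gt0 K); rewrite cardK.
rewrite /=; case: ifP => // _; case: ifP => // _; congr (- _)%R.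
apply: eq_bigr => L /andP[_ /proper_card ltLK].
by apply: mobius_rec_stable; rewrite // -ltnS -cardK.
Qed.

Lemma mobius0 H K : ~~ (H \subset K) -> mobius H K = 0%R.
Proof. by rewrite mobiusE => /negbTE->. Qed.

Lemma mobiusii H : mobius H H = 1%R.
Proof. by rewrite mobiusE subxx eqxx. Qed.

Lemma sum_mobius_left H L :
  (\sum_(K : {group gT} | K \subset L) mobius H K)%R = (H == L)%:R%R.
Proof.
have [sHL | nsHL] := boolP (H \subset L); last first.
  rewrite big1 => [|K sKL]; last by apply: mobius0; apply: contra nsHL => /subset_trans->.
  by case: eqP nsHL => // ->; rewrite subxx.
rewrite (bigD1 L) //=; have [<- | neqHL] := eqP.
  rewrite mobiusii big1 ?addr0 // => K /andP[sKH neqKH]; apply: mobius0.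
  by apply: contra neqKH => sHK; apply/eqP/val_inj/eqP; rewrite eqEsubset sKH.
rewrite [mobius H L]mobiusE sHL (introF eqP neqHL); apply/eqP; rewrite addrC addr_eq0.
rewrite (bigID (fun K => H \subset K)) /= [X in (_ + X)%R]big1 ?addr0; last first.
  by move=> K /andP[_ /mobius0].
rewrite opprK; apply/eqP/eq_bigl => K.
by rewrite [RHS]andbC properEneq; case: (H \subset K); rewrite ?andbF ?andbT // andbC.
Qed.

Lemma sum_mobius_right H L :
  (\sum_(K : {group gT} | H \subset K) mobius K L)%R = (H == L)%:R%R.
Proof.
pose n := #|{: {group gT}}|; pose ev (i : 'I_n) : {group gT} := enum_val i.
have sum_enum (F : {group gT} -> rat) : (\sum_K F K = \sum_(i < n) F (ev i))%R.
  by rewrite -(big_enum_val (A := {: {group gT}})).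
(* A one-sided inverse of a square matrix is two-sided. *)
pose Mu : 'M[rat]_n := (\matrix_(i, j) mobius (ev i) (ev j))%R.
pose Zeta : 'M[rat]_n := (\matrix_(i, j) (ev i \subset ev j)%:R)%R.
have MuZeta : (Mu *m Zeta = 1%:M)%R.
  apply/matrixP => i j; rewrite !mxE -(inj_eq enum_val_inj) -sum_mobius_left.
  rewrite [RHS]big_mkcond sum_enum; apply: eq_bigr => k _; rewrite !mxE.
  by case: ifP; rewrite ?mulr1 ?mulr0.
have := congr1 (fun M : 'M[rat]_n => M (enum_rank H) (enum_rank L)) (mulmx1C MuZeta).
rewrite !mxE (inj_eq enum_rank_inj) => <-.
rewrite big_mkcond sum_enum; apply: eq_bigr => k _.
by rewrite !mxE /ev !enum_rankK; case: ifP; rewrite ?mul1r ?mul0r.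
Qed.

Lemma conjG_group_inj g : injective (fun K : {group gT} => (K :^ g)%G).
Proof. by move=> H K /(congr1 val)/conjsg_inj/val_inj. Qed.

Lemma mobiusJ g H K : mobius (H :^ g)%G (K :^ g)%G = mobius H K.
Proof.
elim: {K}_.+1 {-2}K (ltnSn #|K|) => // m IHm K ltKm.
rewrite mobiusE [RHS]mobiusE /= conjSg (inj_eq (@conjG_group_inj g)).
case: ifP => // _; case: ifP => // _; congr (- _)%R.
rewrite (reindex_inj (@conjG_group_inj g)) /=.
apply: eq_big => L; first by rewrite conjSg properJ.
case/andP=> _; rewrite properJ => /proper_card ltLK.
by apply: IHm; apply: leq_trans ltLK _.
Qed.

End Mobius.

Section CosetCounting.
Variable gT : finGroupType.
Implicit Types (H K : {group gT}) (B : {set gT}).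

Lemma card_rcosets_stable H B : H * B \subset B -> (#|rcosets H B| * #|H|)%N = #|B|.
Proof.
move=> sHBB; have partB : partition (rcosets H B) B.
  apply/and3P; split.
  - rewrite cover_imset eqEsubset; apply/andP; split.
      by apply/bigcupsP => b Bb; apply: subset_trans sHBB; rewrite rcosetE mulgS ?sub1set.
    by apply/subsetP => b Bb; apply/bigcupP; exists b; rewrite ?rcosetE ?rcoset_refl.
  - apply: (trivIsetS _ (partition_trivIset (rcosets_partition (subsetT H)))).
    exact: imsetS (subsetT B).
  - apply/imsetP => -[b _ /esym/eqP]; apply/negP.
    by rewrite -cards_eq0 rcosetE card_rcoset -lt0n cardG_gt0.
rewrite (@card_uniform_partition _ #|H| _ _ _ partB) // => _ /rcosetsP[b _ ->].
exact: card_rcoset.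
Qed.

Lemma card_lcosets_stable K B : B * K \subset B -> (#|lcosets K B| * #|K|)%N = #|B|.
Proof.
move=> sBKB; rewrite -[#|lcosets K B|]card_invg invg_lcosets invGid -[#|B|]card_invg.
by apply: card_rcosets_stable; rewrite -invGid -invMg invSg.
Qed.

End CosetCounting.

Section OupGroup.
Variables (gT : finGroupType) (p : nat).
Implicit Type X : {group gT}.

Lemma group_set_Oup X : group_set (Oup p X).
Proof. exact: group_set_bigcap. Qed.

Canonical Oup_group X := group (group_set_Oup X).

Lemma Oup_sub X : Oup p X \subset X.
Proof. by apply: (bigcap_inf X); rewrite normal_refl trivg_quotient pgroup1. Qed.

Lemma OupJ X g : Oup p (X :^ g)%G = Oup p X :^ g.
Proof.
rewrite /Oup -bigcapJ (reindex_inj (@conjG_group_inj gT g)) /=.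
apply: eq_bigl => N; rewrite normalJ; case nNX: (N <| X) => //=.
have nXN := normal_norm nNX; have nXgNg : X :^ g \subset 'N(N :^ g) by rewrite normJ conjSg.
by rewrite /pgroup !card_quotient ?indexJg.
Qed.

End OupGroup.

Section NonidentityPSubgroups.
Variables (gT : finGroupType) (G : {group gT}) (p : nat).
Implicit Types H K L : {group gT}.
Local Notation P := (nonid_psub G p).
Local Notation X := (pclasses G p).
Local Notation rep := (@cls_rep gT).

Definition conj_invariant (R : Type) (f : {group gT} -> R) :=
  forall K g, P K -> g \in G -> f (K :^ g)%G = f K.

Lemma nonid_psubJ K g : g \in G -> P (K :^ g)%G = P K.
Proof. by move=> Gg; rewrite /nonid_psub /= pgroupJ -{1}(conjGid Gg) conjSg conjsg_eq1. Qed.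

Lemma nonid_psub_between H K L : P H -> P L -> H \subset K -> K \subset L -> P K.
Proof.
case/and3P=> _ _ ntH /and3P[sLG pL _] sHK sKL.
by rewrite /nonid_psub (subset_trans sKL sLG) (pgroupS sKL pL) (subG1_contra sHK ntH).
Qed.

Lemma sum_psubJ g (F : {group gT} -> rat) : g \in G ->
  (\sum_(L | P L) F L = \sum_(L | P L) F (L :^ g)%G)%R.
Proof.
move=> Gg; rewrite (reindex_inj (@conjG_group_inj gT g)).
by apply: eq_bigl => L; rewrite nonid_psubJ.
Qed.

Lemma subnormJ K g : g \in G -> 'N_G(K :^ g) = 'N_G(K) :^ g.
Proof. by move=> Gg; rewrite normJ -{1}(conjGid Gg) conjIg. Qed.

Lemma subcentJ K g : g \in G -> 'C_G(K :^ g) = 'C_G(K) :^ g.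
Proof. by move=> Gg; rewrite centJ -{1}(conjGid Gg) conjIg. Qed.

Lemma card_transpJ H K g : g \in G -> #|transp G H (K :^ g)%G| = #|transp G H K|.
Proof.
move=> Gg; rewrite -(card_rcoset (transp G H K) g); apply: eq_card => x /=.
by rewrite mem_rcoset !inE (groupMr _ (groupVr Gg)) /= conjsgM [in RHS]sub_conjg invgK.
Qed.

Lemma card_conjugating K L :
  #|[set g in G | K :^ g == L :> {set gT}]| = if gval L \in K :^: G then #|'N_G(K)| else 0.
Proof.
case: ifP => [/imsetP[h Gh ->] | notLKG].
  rewrite -(card_rcoset 'N_G(K) h); apply: eq_card => g.
  rewrite inE mem_rcoset in_setI (groupMr _ (groupVr Gh)); congr (_ && _).
  apply/eqP/normP => [KgKh | nKgh]; first by rewrite conjsgM KgKh conjsgK.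
  by rewrite -[g](mulgKV h) conjsgM nKgh.
apply/eqP; rewrite cards_eq0; apply/eqP/setP => g; rewrite !inE.
by apply/andP=> -[Gg /eqP KgL]; rewrite -KgL imset_f in notLKG.
Qed.

Lemma sum_conjugates K (F : {group gT} -> rat) :
  (\sum_(L | gval L \in K :^: G) F L =
   #|'N_G(K)|%:R^-1 * \sum_(g in G) F (K :^ g)%G)%R.
Proof.
rewrite (partition_big (fun g => (K :^ g)%G) predT) //= mulr_sumr [LHS]big_mkcond.
apply: eq_bigr => L _; rewrite (eq_bigr (fun _ => F L)) => [|g /andP[_ /eqP ->]] //.
rewrite (eq_bigl [in [set g in G | K :^ g == L :> {set gT}]]) => [|g]; last first.
  by rewrite !inE.
rewrite sumr_const card_conjugating; case: ifP => _; last by rewrite mulr0n mulr0.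
by rewrite -[(F L *+ _)%R]mulr_natr mulrCA mulVf ?mulr1 ?natrG_neq0.
Qed.

Lemma cls_repP C : C \in X -> [/\ gval (rep C) \in C, P (rep C) & C = rep C :^: G].
Proof.
case/imsetP=> K0; rewrite inE => PK0 ->; rewrite /cls_rep.
case: pickP => [K /= KK0 | /(_ K0)]; last by rewrite /= -orbitJs orbit_refl.
have [g Gg KK0g] := imsetP KK0; split=> //.
  have -> : K = (K0 :^ g)%G by apply: val_inj.
  by rewrite nonid_psubJ.
by rewrite KK0g conjugates_conj lcoset_id.
Qed.

Lemma mem_pclass C K : C \in X -> (P K && (gval K :^: G == C)) = (gval K \in C).
Proof.
move=> CX; have [_ Prep ->] := cls_repP CX.
apply/andP/idP => [[_ /eqP <-] | /imsetP[g Gg defK]]; first by rewrite -orbitJs orbit_refl.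
have -> : K = (rep C :^ g)%G by apply: val_inj.
by rewrite nonid_psubJ //= conjugates_conj lcoset_id.
Qed.

Lemma sum_psub_classes (F : {group gT} -> rat) :
  (\sum_(K | P K) F K = \sum_(C in X) \sum_(K | gval K \in C) F K)%R.
Proof.
rewrite (partition_big (fun K => gval K :^: G) [in X]) => [|K PK]; last first.
  by apply: imset_f; rewrite inE.
by apply: eq_bigr => C CX; apply: eq_bigl => K; rewrite mem_pclass.
Qed.

Lemma sum_classes_rep (F : {group gT} -> rat) : conj_invariant F ->
  (\sum_(C in X) F (rep C) = \sum_(K | P K) F K * #|'N_G(K)|%:R / #|G|%:R)%R.
Proof.
move=> FJ; rewrite sum_psub_classes; apply: eq_bigr => C CX.
have [_ Prep defC] := cls_repP CX; rewrite [in RHS]defC sum_conjugates.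
rewrite (eq_bigr (fun _ => F (rep C) * #|'N_G(rep C)|%:R / #|G|%:R)%R) => [|g Gg].
  by rewrite sumr_const -mulr_natr; field; rewrite !natrG_neq0.
by rewrite FJ // /= subnormJ // cardJg.
Qed.

Lemma sum_cmu_classes K (f : {group gT} -> rat) : conj_invariant f ->
  (\sum_(C in X) cmu G K (rep C) * f (rep C) =
   #|'N_G(K)|%:R^-1 * \sum_(L | P L) mobius K L * f L)%R.
Proof.
move=> fJ; rewrite sum_psub_classes mulr_sumr; apply: eq_bigr => C CX.
have [_ Prep defC] := cls_repP CX.
rewrite /cmu -defC -mulrA mulr_suml; congr (_ * _)%R; apply: eq_bigr => L.
rewrite {1}defC => /imsetP[g Gg defL].
have -> : L = (rep C :^ g)%G by apply: val_inj.
by rewrite fJ.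
Qed.

Lemma sum_psub_mobius_right H L : P H -> P L ->
  (\sum_(K | P K && (H \subset K)) mobius K L = (H == L)%:R)%R.
Proof.
move=> PH PL; rewrite -sum_mobius_right [LHS]big_mkcond [RHS]big_mkcond.
apply: eq_bigr => K _; case sHK: (H \subset K); rewrite ?andbF ?andbT //.
case PK: (P K) => //; rewrite mobius0 //; apply: contraFN PK => sKL.
exact: nonid_psub_between sHK sKL.
Qed.

Lemma sum_psub_mobius_left H L : P H -> P L ->
  (\sum_(K | P K && (K \subset L)) mobius H K = (H == L)%:R)%R.
Proof.
move=> PH PL; rewrite -sum_mobius_left [LHS]big_mkcond [RHS]big_mkcond.
apply: eq_bigr => K _; case sKL: (K \subset L); rewrite ?andbF ?andbT //.
case PK: (P K) => //; rewrite mobius0 //; apply: contraFN PK => sHK.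
exact: nonid_psub_between sHK sKL.
Qed.

Lemma sum_psub_mobius1 L : P L -> (\sum_(K | P K) mobius K L = - mobius1 L)%R.
Proof.
case/and3P=> sLG pL ntL; have := sum_mobius_right 1%G L.
rewrite (bigD1 1%G) ?sub1G //= (introF eqP) => [|eq1L]; last by rewrite -eq1L eqxx in ntL.
move/eqP; rewrite addrC addr_eq0 => /eqP <-.
rewrite [LHS]big_mkcond [RHS]big_mkcond; apply: eq_bigr => K _ /=.
have [sKL | nsKL] := boolP (K \subset L); last by rewrite mobius0 // !if_same.
by rewrite sub1G /nonid_psub (subset_trans sKL sLG) (pgroupS sKL pL).
Qed.

Lemma psub_mobius_inversion_right H (f : {group gT} -> rat) : P H ->
  (\sum_(K | P K && (H \subset K)) \sum_(L | P L) mobius K L * f L = f H)%R.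
Proof.
move=> PH; rewrite exchange_big /=.
rewrite (eq_bigr (fun L => (H == L)%:R * f L)%R) => [|L PL]; last first.
  by rewrite -mulr_suml sum_psub_mobius_right.
rewrite (bigD1 H) //= eqxx mul1r big1 ?addr0 // => L /andP[_ neqLH].
by rewrite eq_sym (negbTE neqLH) mul0r.
Qed.

Lemma psub_mobius_inversion_left L (f : {group gT} -> rat) : P L ->
  (\sum_(K | P K && (K \subset L)) \sum_(H | P H) f H * mobius H K = f L)%R.
Proof.
move=> PL; rewrite exchange_big /=.
rewrite (eq_bigr (fun H => f H * (H == L)%:R)%R) => [|H PH]; last first.
  by rewrite -mulr_sumr sum_psub_mobius_left.
rewrite (bigD1 L) //= eqxx mulr1 big1 ?addr0 // => H /andP[_ neqHL].
by rewrite (negbTE neqHL) mulr0.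
Qed.

Lemma natr_card_transp H K :
  (#|transp G H K|%:R = \sum_(g in G | H :^ g \subset K) 1 :> rat)%R.
Proof. by rewrite sumr_const; apply: congr1; apply: eq_card => g; rewrite inE. Qed.

Lemma sum_card_transp_right H (F : {group gT} -> rat) :
  (\sum_(K | P K) #|transp G H K|%:R * F K =
   \sum_(g in G) \sum_(K | P K && (H :^ g \subset K)) F K)%R.
Proof.
under eq_bigr => K _ do rewrite natr_card_transp mulr_suml.
rewrite (exchange_big_dep [in G]) /= => [|K g _ /andP[]//].
by apply: eq_bigr => g Gg; apply: eq_big => [K | K _]; rewrite ?Gg ?mul1r.
Qed.

Lemma sum_card_transp_left K (F : {group gT} -> rat) :
  (\sum_(H | P H) #|transp G H K|%:R * F H =
   \sum_(g in G) \sum_(H | P H && (H \subset K :^ g^-1)) F H)%R.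
Proof.
under eq_bigr => H _ do rewrite natr_card_transp mulr_suml.
rewrite (exchange_big_dep [in G]) /= => [|H g _ /andP[]//].
by apply: eq_bigr => g Gg; apply: eq_big => [H | H _]; rewrite ?Gg ?sub_conjg ?mul1r.
Qed.

Lemma mobius_sum_invariant (f : {group gT} -> rat) : conj_invariant f ->
  conj_invariant (fun K => \sum_(L | P L) mobius K L * f L)%R.
Proof.
move=> fJ K g PK Gg /=; rewrite (sum_psubJ _ Gg); apply: eq_bigr => L PL.
by rewrite mobiusJ fJ.
Qed.

Lemma subcent_mul_transp_sub H K (A : {set gT}) :
  A \subset 'C_G(H) -> A * transp G H K \subset transp G H K.
Proof.
move=> sAC; apply/subsetP => _ /mulsgP[a b Aa /setIdP[Gb sHbK] ->].
have /setIP[Ga /centP cHa] := subsetP sAC a Aa.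
rewrite inE groupM //= conjsgM; suff -> : H :^ a = H by [].
by apply/normP; apply: (subsetP (cent_sub H)); apply/centP.
Qed.

Lemma transp_mul_sub H K : K \subset G -> transp G H K * K \subset transp G H K.
Proof.
move=> sKG; apply/subsetP => _ /mulsgP[b k /setIdP[Gb sHbK] Kk ->].
by rewrite inE groupM ?(subsetP sKG k Kk) //= conjsgM -(conjGid Kk) conjSg.
Qed.

Lemma sum_weighting_coweighting hom w v :
  is_weighting G p hom w -> is_coweighting G p hom v ->
  (\sum_(K | P K) w K = \sum_(K | P K) v K)%R.
Proof.
move=> hw hv; transitivity (\sum_(b | P b) \sum_(a | P a) v a * (hom a b)%:R * w b)%R.
  by apply: eq_bigr => b Pb; rewrite -mulr_suml hv // mul1r.
rewrite exchange_big /=; apply: eq_bigr => a Pa.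
under eq_bigr => b _ do rewrite -mulrA.
by rewrite -mulr_sumr hw // mulr1.
Qed.

Lemma euler_char_is_coweighting_sum hom w v :
  is_weighting G p hom w -> is_coweighting G p hom v ->
  euler_char_is G p hom (\sum_(K | P K) v K)%R.
Proof.
move=> hw hv; split; [by exists w | by exists v | |].
  by move=> w' hw'; apply: sum_weighting_coweighting hv.
by move=> v' hv'; rewrite -(sum_weighting_coweighting hw hv') (sum_weighting_coweighting hw hv).
Qed.

Section TransporterQuotients.
Variables (s t : {group gT} -> nat) (hom : {group gT} -> {group gT} -> nat).
Hypotheses (s_gt0 : forall K, 0 < s K) (t_gt0 : forall K, 0 < t K).
Hypotheses (sJ : conj_invariant s) (tJ : conj_invariant t).
Hypothesis hom_transp :
  forall H K, P H -> P K -> (hom H K * (s H * t K))%N = #|transp G H K|.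

Let natr_s_neq0 K : ((s K)%:R != 0 :> rat)%R. Proof. by rewrite pnatr_eq0 -lt0n. Qed.
Let natr_t_neq0 K : ((t K)%:R != 0 :> rat)%R. Proof. by rewrite pnatr_eq0 -lt0n. Qed.

Lemma natr_hom H K : P H -> P K ->
  ((hom H K)%:R = #|transp G H K|%:R / ((s H)%:R * (t K)%:R) :> rat)%R.
Proof.
by move=> PH PK; rewrite -hom_transp // !natrM mulfK // mulf_neq0.
Qed.

Lemma homJ H K g : P H -> P K -> g \in G -> hom H (K :^ g)%G = hom H K.
Proof.
move=> PH PK Gg; apply/eqP; rewrite -(@eqn_pmul2r (s H * t K)) ?muln_gt0 ?s_gt0 ?t_gt0 //.
by rewrite -{1}(tJ PK Gg) !hom_transp ?nonid_psubJ // card_transpJ.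
Qed.

Lemma class_weighting_transp (k : {set {set gT}} -> rat) :
  (forall C, C \in X -> k C = (t (rep C))%:R *
     \sum_(D in X) cmu G (rep C) (rep D) * (s (rep D))%:R)%R ->
  is_class_weighting G p hom k.
Proof.
move=> kE H PH.
pose mu_s K := (\sum_(L | P L) mobius K L * (s L)%:R)%R.
pose F K := (#|transp G H K|%:R * (#|'N_G(K)|%:R^-1 * mu_s K) / (s H)%:R)%R.
have sJr : conj_invariant (fun K => (s K)%:R : rat) by move=> K g PK Gg; rewrite sJ.
transitivity (\sum_(C in X) F (rep C))%R.
  apply: eq_bigr => C CX; have [_ Prep _] := cls_repP CX.
  rewrite kE // (sum_cmu_classes _ sJr) natr_hom // /F /mu_s; field.
  by rewrite natr_s_neq0 natr_t_neq0 natrG_neq0.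
rewrite sum_classes_rep => [|K g PK Gg]; last first.
  by rewrite /F card_transpJ // /= subnormJ // cardJg /mu_s (mobius_sum_invariant sJr).
transitivity (\sum_(K | P K) #|transp G H K|%:R * (mu_s K / (#|G|%:R * (s H)%:R)))%R.
  apply: eq_bigr => K PK; rewrite /F; field.
  by rewrite natr_s_neq0 !natrG_neq0.
rewrite sum_card_transp_right.
transitivity (\sum_(g in G) (s H)%:R / (#|G|%:R * (s H)%:R) : rat)%R.
  apply: eq_bigr => g Gg; rewrite -mulr_suml psub_mobius_inversion_right ?nonid_psubJ //.
  by rewrite sJ.
by rewrite sumr_const -mulr_natl; field; rewrite natr_s_neq0 natrG_neq0.
Qed.

Definition psub_coweight a : rat :=
  ((s a)%:R * (\sum_(c | P c) (t c)%:R * mobius c a) / #|G|%:R)%R.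

Lemma coweighting_transp : is_coweighting G p hom psub_coweight.
Proof.
move=> b Pb; pose mu_t a := (\sum_(c | P c) (t c)%:R * mobius c a : rat)%R.
transitivity (\sum_(a | P a) #|transp G a b|%:R * (mu_t a / (#|G|%:R * (t b)%:R)))%R.
  apply: eq_bigr => a Pa; rewrite natr_hom // /psub_coweight /mu_t; field.
  by rewrite natr_s_neq0 natr_t_neq0 natrG_neq0.
rewrite sum_card_transp_left.
transitivity (\sum_(g in G) (t b)%:R / (#|G|%:R * (t b)%:R) : rat)%R.
  apply: eq_bigr => g Gg; rewrite -mulr_suml.
  have Pbg : P (b :^ g^-1)%G by rewrite nonid_psubJ ?groupV.
  by rewrite (psub_mobius_inversion_left (fun c => (t c)%:R)%R Pbg) tJ ?groupV.
by rewrite sumr_const -mulr_natl; field; rewrite natr_t_neq0 natrG_neq0.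
Qed.

Lemma weighting_of_class_weighting (k : {set {set gT}} -> rat) :
  is_class_weighting G p hom k ->
  is_weighting G p hom (fun b => k (gval b :^: G) * #|'N_G(b)|%:R / #|G|%:R)%R.
Proof.
move=> hk a Pa; rewrite -[RHS](hk a Pa).
transitivity (\sum_(C in X) (hom a (rep C))%:R * k (gval (rep C) :^: G))%R; last first.
  by apply: eq_bigr => C CX; have [_ _ <-] := cls_repP CX.
rewrite (sum_classes_rep (F := fun K => (hom a K)%:R * k (gval K :^: G))%R).
  by apply: eq_bigr => K PK; rewrite !mulrA.
move=> K g PK Gg /=; rewrite homJ // conjugates_conj lcoset_id //.
Qed.

Lemma weighting_euler_char_transp (k : {set {set gT}} -> rat) x :
  (forall C, C \in X -> k C = (t (rep C))%:R *
     \sum_(D in X) cmu G (rep C) (rep D) * (s (rep D))%:R)%R ->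
  (\sum_(a | P a) psub_coweight a)%R = x ->
  is_class_weighting G p hom k /\ euler_char_is G p hom x.
Proof.
move=> kE <-; have hk := class_weighting_transp kE; split=> //.
exact: euler_char_is_coweighting_sum (weighting_of_class_weighting hk) coweighting_transp.
Qed.

End TransporterQuotients.

Lemma sum_psub_coweight_source (s : {group gT} -> nat) : conj_invariant s ->
  (\sum_(a | P a) psub_coweight s (fun=> 1%N) a =
   \sum_(C in X) - cmu1 G (rep C) * (s (rep C))%:R)%R.
Proof.
move=> sJ; rewrite (sum_classes_rep (F := fun K => - cmu1 G K * (s K)%:R)%R); last first.
  move=> K g PK Gg; have conj1G : (1 :^ g)%G = 1%G by apply: val_inj; apply: conjs1g.
  by rewrite /cmu1 /mobius1 /= subnormJ // cardJg sJ // -[in RHS](mobiusJ g) conj1G.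
apply: eq_bigr => a Pa; rewrite /psub_coweight.
under eq_bigr => c _ do rewrite mul1r.
rewrite sum_psub_mobius1 // /cmu1; field.
by rewrite !natrG_neq0.
Qed.

Lemma sum_psub_coweight_card :
  (\sum_(a | P a) psub_coweight (fun=> 1%N) (fun K => #|K|) a =
   \sum_(C in X) \sum_(D in X) #|rep C|%:R * cmu G (rep C) (rep D))%R.
Proof.
pose F K := (#|K|%:R * (#|'N_G(K)|%:R^-1 * \sum_(L | P L) mobius K L * 1))%R.
transitivity (\sum_(C in X) F (rep C))%R; last first.
  apply: eq_bigr => C _; rewrite /F -(@sum_cmu_classes (rep C) (fun=> 1%R)) // mulr_sumr.
  by apply: eq_bigr => D _; rewrite mulr1.
rewrite sum_classes_rep => [|K g PK Gg]; last first.
  by rewrite /F /= cardJg subnormJ // cardJg (@mobius_sum_invariant (fun=> 1%R)).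
rewrite /psub_coweight /F; under eq_bigr => a _ do rewrite mul1r mulr_suml.
rewrite exchange_big /=; apply: eq_bigr => c Pc.
rewrite -mulr_suml -mulr_sumr (eq_bigr _ (fun L _ => mulr1 (mobius c L))); field.
by rewrite !natrG_neq0.
Qed.

End NonidentityPSubgroups.

Section FourCategories.
Variables (gT : finGroupType) (G : {group gT}) (p : nat).
Local Notation X := (pclasses G p).
Local Notation rep := (@cls_rep gT).

Lemma transporter_category_weighting :
  [/\ is_class_weighting G p (homT G) (fun C => \sum_(D in X) cmu G (rep C) (rep D))%R
    & euler_char_is G p (homT G) (\sum_(D in X) - cmu1 G (rep D))%R].
Proof.
apply: (@weighting_euler_char_transp _ G p (fun=> 1%N) (fun=> 1%N)) => //.
- by move=> H K _ _; rewrite !muln1.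
- by move=> C _; rewrite mul1r; apply: eq_bigr => D _; rewrite mulr1.
- by rewrite sum_psub_coweight_source //; apply: eq_bigr => D _; rewrite mulr1.
Qed.

Lemma card_subcent_invariant : conj_invariant G p (fun K => #|'C_G(K)|).
Proof. by move=> K g _ Gg; rewrite /= subcentJ // cardJg. Qed.

Lemma card_Oup_subcent_invariant : conj_invariant G p (fun K => #|Oup p 'C_G(K)%G|).
Proof.
move=> K g _ Gg; have -> : 'C_G(K :^ g)%G = ('C_G(K) :^ g)%G by apply/val_inj/subcentJ.
by rewrite OupJ cardJg.
Qed.

Lemma linking_category_weighting :
  [/\ is_class_weighting G p (homL G p)
        (fun C => \sum_(D in X) cmu G (rep C) (rep D) * #|Oup p 'C_G(rep D)%G|%:R)%R
    & euler_char_is G p (homL G p)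
        (\sum_(D in X) - cmu1 G (rep D) * #|Oup p 'C_G(rep D)%G|%:R)%R].
Proof.
apply: (@weighting_euler_char_transp _ G p (fun H => #|Oup p 'C_G(H)%G|) (fun=> 1%N)).
- by move=> K; apply: cardG_gt0.
- by [].
- exact: card_Oup_subcent_invariant.
- by [].
- move=> H K _ _; rewrite muln1; apply: card_rcosets_stable.
  by apply: subcent_mul_transp_sub; apply: Oup_sub.
- by move=> C _; rewrite mul1r.
- exact: sum_psub_coweight_source card_Oup_subcent_invariant.
Qed.

Lemma fusion_category_weighting :
  [/\ is_class_weighting G p (homF G)
        (fun C => \sum_(D in X) cmu G (rep C) (rep D) * #|'C_G(rep D)|%:R)%R
    & euler_char_is G p (homF G)
        (\sum_(D in X) - cmu1 G (rep D) * #|'C_G(rep D)|%:R)%R].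
Proof.
apply: (@weighting_euler_char_transp _ G p (fun H => #|'C_G(H)|) (fun=> 1%N)).
- by move=> K; apply: cardG_gt0.
- by [].
- exact: card_subcent_invariant.
- by [].
- move=> H K _ _; rewrite muln1; apply: card_rcosets_stable.
  exact: subcent_mul_transp_sub.
- by move=> C _; rewrite mul1r.
- exact: sum_psub_coweight_source card_subcent_invariant.
Qed.

Lemma orbit_category_weighting :
  [/\ is_class_weighting G p (homO G)
        (fun C => #|rep C|%:R * \sum_(D in X) cmu G (rep C) (rep D))%R
    & euler_char_is G p (homO G)
        (\sum_(C in X) \sum_(D in X) #|rep C|%:R * cmu G (rep C) (rep D))%R].
Proof.
apply: (@weighting_euler_char_transp _ G p (fun=> 1%N) (fun K => #|K|)).
- by [].
- by move=> K; apply: cardG_gt0.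
- by [].
- by move=> K g _ _; rewrite /= cardJg.
- move=> H K _ /and3P[sKG _ _]; rewrite mul1n; apply: card_lcosets_stable.
  exact: transp_mul_sub.
- by move=> C _; congr (_ * _)%R; apply: eq_bigr => D _; rewrite mulr1.
- exact: sum_psub_coweight_card.
Qed.

End FourCategories.

Theorem proposition3p6 (gT : finGroupType) (G : {group gT}) (p : nat) :
  prime p ->
  let X := pclasses G p in
  let r := @cls_rep gT in
  [/\ is_class_weighting G p (homT G)
        (fun CH => \sum_(CK in X) cmu G (r CH) (r CK))%R
    & euler_char_is G p (homT G)
        (\sum_(CK in X) - cmu1 G (r CK))%R] /\
  [/\ is_class_weighting G p (homL G p)
        (fun CH => \sum_(CK in X)
                     cmu G (r CH) (r CK) * (#|Oup p ('C_G(r CK))%G|)%:R)%R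
    & euler_char_is G p (homL G p)
        (\sum_(CK in X) - cmu1 G (r CK) * (#|Oup p ('C_G(r CK))%G|)%:R)%R] /\
  [/\ is_class_weighting G p (homF G)
        (fun CH => \sum_(CK in X)
                     cmu G (r CH) (r CK) * (#|('C_G(r CK))%g|)%:R)%R
    & euler_char_is G p (homF G)
        (\sum_(CK in X) - cmu1 G (r CK) * (#|('C_G(r CK))%g|)%:R)%R] /\
  [/\ is_class_weighting G p (homO G)
        (fun CH => (#|r CH|)%:R * \sum_(CK in X) cmu G (r CH) (r CK))%R
    & euler_char_is G p (homO G)
        (\sum_(CH in X) \sum_(CK in X) (#|r CH|)%:R * cmu G (r CH) (r CK))%R].
Proof.
move=> _ /=; split; first exact: transporter_category_weighting.
split; first exact: linking_category_weighting.
by split; [exact: fusion_category_weighting | exact: orbit_category_weighting].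
Qed.
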